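(* Consider the context-free grammar with nonterminals $S,R$, terminals $\bullet,(,)$, start symbol $S$ and rules $$S\to \bullet \mid S\bullet \mid (R) \mid S(R),\qquad R\to (\bullet) \mid (R) \mid (S(R)) \mid (S\bullet).$$ Then the grammar is non-ambiguous, the language generated from $S$ is exactly the set of nonempty canonical secondary structures (in dot-bracket notation), and the language generated from $R$ is exactly the set of nonempty secondary structures $T$ such that $(T)$ is canonical.
   Context: A secondary structure on $[1,n]$ (with $\theta=1$) is a set of pairs $(i,j)$, $1\le i<j\le n$, with no crossing pairs ($i<k<j<\ell$), each position in at most one pair, and $j-i>1$ for each pair; it is written as a dot-bracket word over $\{\bullet,(,)\}$. It is canonical if there is no pair $(i,j)$ with both $(i-1,j+1)$ and $(i+1,j-1)$ absent. A grammar is non-ambiguous if no word has two distinct leftmost derivations. *)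

From mathcomp Require Import all_boot.
From Stdlib Require List.
Set Implicit Arguments. Unset Strict Implicit. Unset Printing Implicit Defensive.

(* Sentential forms are words over N + T (inl = nonterminal, inr = terminal). *)
Definition grammar (N T : Type) := N -> list (list (N + T)).

Definition is_terminal {N T : Type} (s : N + T) : bool :=
  if s is inr _ then true else false.

Definition step {N T : Type} (g : grammar N T) (u v : list (N + T)) : Prop :=
  exists (x : list (N + T)) (A : N) (y rhs : list (N + T)),
    List.In rhs (g A) /\ u = x ++ inl A :: y /\ v = x ++ rhs ++ y.

Definition lm_step {N T : Type} (g : grammar N T) (u v : list (N + T)) : Prop :=
  exists (x : list (N + T)) (A : N) (y rhs : list (N + T)),
    all is_terminal x /\ List.In rhs (g A) /\
    u = x ++ inl A :: y /\ v = x ++ rhs ++ y.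

Inductive derives {N T : Type} (g : grammar N T) :
  list (N + T) -> list (N + T) -> Prop :=
| derives_refl u : derives g u u
| derives_step u v w : step g u v -> derives g v w -> derives g u w.

Definition generates {N T : Type} (g : grammar N T) (A : N) (w : list T) : Prop :=
  derives g [:: inl A] (map inr w).

(* A leftmost derivation of w from A is recorded as the list d of the
   sentential forms following the initial form [A]; consecutive forms are
   related by leftmost steps and the last form is w. *)
Fixpoint lm_chain {N T : Type} (g : grammar N T) (u : list (N + T))
    (d : list (list (N + T))) : Prop :=
  match d with
  | [::] => True
  | v :: d' => lm_step g u v /\ lm_chain g v d'
  end.

Definition lm_derivation {N T : Type} (g : grammar N T) (A : N) (w : list T)
    (d : list (list (N + T))) : Prop :=
  lm_chain g [:: inl A] d /\ last [:: inl A] d = map inr w.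

Definition non_ambiguous {N T : Type} (g : grammar N T) (S : N) : Prop :=
  forall (w : list T) d1 d2,
    lm_derivation g S w d1 -> lm_derivation g S w d2 -> d1 = d2.

Inductive sym := Dot | Op | Cl.

(* A secondary structure on [1,n] (theta = 1): a set P of pairs (i,j). *)
Definition secstruct (n : nat) (P : nat -> nat -> bool) : Prop :=
  (forall i j, P i j -> [/\ 1 <= i, i < j, j <= n & j - i > 1]) /\
  (forall i j k l, P i j -> P k l -> ~ (i < k /\ k < j /\ j < l)) /\
  (forall i j k l p, P i j -> P k l -> (p = i \/ p = j) -> (p = k \/ p = l) ->
     i = k /\ j = l).

Definition canonical (P : nat -> nat -> bool) : Prop :=
  forall i j, P i j -> P i.-1 j.+1 \/ P i.+1 j.-1.

Definition dotbracket (n : nat) (P : nat -> nat -> bool) : list sym :=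
  [seq (if has (P k) (iota 1 n) then Op
        else if has (fun i => P i k) (iota 1 n) then Cl else Dot)
  | k <- iota 1 n].

Definition ss_word (w : list sym) : Prop :=
  exists n P, secstruct n P /\ dotbracket n P = w.

Definition canon_ss_word (w : list sym) : Prop :=
  exists n P, secstruct n P /\ canonical P /\ dotbracket n P = w.

Inductive nt := NS | NR.

Definition rna_grammar : grammar nt sym := fun A =>
  match A with
  | NS => [:: [:: inr Dot];
              [:: inl NS; inr Dot];
              [:: inr Op; inl NR; inr Cl];
              [:: inl NS; inr Op; inl NR; inr Cl]]
  | NR => [:: [:: inr Op; inr Dot; inr Cl];
              [:: inr Op; inl NR; inr Cl];
              [:: inr Op; inl NS; inr Op; inl NR; inr Cl; inr Cl];
              [:: inr Op; inl NS; inr Dot; inr Cl]]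
  end.

From Stdlib Require Import ZArith FunctionalExtensionality.
From Stdlib Require List.
From mathcomp Require Import all_boot zify.
Set Implicit Arguments. Unset Strict Implicit. Unset Printing Implicit Defensive.

(* 1. A general criterion for context-free grammars (non_ambiguous_criterion):
      if a language assignment [L] is closed under the rules, distinct rules of
      a nonterminal yield distinct words, and in every right-hand side each
      nonterminal is followed by a terminal and splits off its part of the
      word uniquely, then leftmost derivations are unique.  The proof is an
      induction on the word, decomposing a leftmost derivation along the
      symbols of the first right-hand side.
   2. Splitting a secondary structure at its last position (unpaired, or
      closing a pair (i, n+1)) shows that the dot-bracket words of canonical
      structures are exactly those of the inductive predicate [canon_word],
      and that dot-bracket words are balanced.
   3. [canon_word] corresponds to the inductive languages [S_word], [R_word]
      that follow the rules; these are the generated languages, and the rules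
      are told apart by the shape of the words they yield (last symbol,
      length, unique splitting of balanced words). *)

Section Derivations.
Variables (N T : Type) (g : grammar N T).

Lemma derives_trans u v w : derives g u v -> derives g v w -> derives g u w.
Proof. by elim=> // {}u v' v'' uv _ IH /IH; apply: derives_step. Qed.

Lemma derives_cat u u' v v' : derives g u u' -> derives g v v' ->
  derives g (u ++ v) (u' ++ v').
Proof.
have catl x x' y : derives g x x' -> derives g (x ++ y) (x' ++ y).
  elim=> [?|{}x x1 x2 [l [A [r [rhs [Hin [-> ->]]]]]] _ IH]; first exact: derives_refl.
  by apply: derives_step IH; exists l, A, (r ++ y), rhs; rewrite -!catA.
have catr x y y' : derives g y y' -> derives g (x ++ y) (x ++ y').
  elim=> [?|{}y y1 y2 [l [A [r [rhs [Hin [-> ->]]]]]] _ IH]; first exact: derives_refl.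
  by apply: derives_step IH; exists (x ++ l), A, r, rhs; rewrite -!catA.
by move=> /(catl _ _ v) Hu /(catr u') Hv; apply: derives_trans Hu Hv.
Qed.

Lemma derives_rule A rhs w : List.In rhs (g A) -> derives g rhs w ->
  derives g [:: inl A] w.
Proof.
by move=> Hin; apply: derives_step; exists [::], A, [::], rhs; rewrite cats0.
Qed.

End Derivations.

Section Yield.
Variables (N T : Type) (L : N -> seq T -> Prop).

Fixpoint yields (u : seq (N + T)) (w : seq T) : Prop :=
  match u with
  | [::] => w = [::]
  | inr t :: u' => exists2 w', w = t :: w' & yields u' w'
  | inl A :: u' => exists w1 w2, [/\ w = w1 ++ w2, L A w1 & yields u' w2]
  end.

Lemma yields_nil : yields [::] [::].
Proof. by []. Qed.

Lemma yields_term t u w : yields u w -> yields (inr t :: u) (t :: w).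
Proof. by exists w. Qed.

Lemma yields_nonterm A u w1 w2 : L A w1 -> yields u w2 ->
  yields (inl A :: u) (w1 ++ w2).
Proof. by exists w1, w2. Qed.

Lemma yields_cat u v w : yields (u ++ v) w <->
  exists w1 w2, [/\ w = w1 ++ w2, yields u w1 & yields v w2].
Proof.
elim: u w => [|[A|t] u IH] w /=.
- by split=> [?|[w1 [w2 [-> -> ?]]]]; [exists [::], w|].
- split=> [[w1 [w2 [-> LA /IH [w3 [w4 [-> ? ?]]]]]]|[w1 [w2 [-> [w3 [w4 [-> ? ?]]] ?]]]].
    by exists (w1 ++ w3), w4; rewrite catA; split=> //; exists w1, w3.
  by exists w3, (w4 ++ w2); rewrite catA; split=> //; apply/IH; exists w4, w2.
- split=> [[w' -> /IH [w1 [w2 [-> ? ?]]]]|[w1 [w2 [-> [w' -> ?] ?]]]].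
    by exists (t :: w1), w2; split=> //; exists w1.
  by exists (w' ++ w2) => //; apply/IH; exists w', w2.
Qed.

Lemma yields_terminals w : yields (map inr w) w.
Proof. by elim: w => //= t w IH; exists w. Qed.

Lemma yields_terminals_inv t w : yields (map inr t) w -> w = t.
Proof. by elim: t w => [|x t IH] w //= [w' -> /IH ->]. Qed.

Lemma yields_single A w : yields [:: inl A] w <-> L A w.
Proof.
split=> [[w1 [w2 [-> ? ->]]]|?]; first by rewrite cats0.
by exists w, [::]; rewrite cats0.
Qed.

Lemma yields_size u w : yields u w -> count is_terminal u <= size w.
Proof.
elim: u w => [|[A|t] u IH] w /=; first by move->.
  by move=> [w1 [w2 [-> _ /IH]]]; rewrite size_cat; lia.
by move=> [w' -> /IH].
Qed.

End Yield.

Section Semantics.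
Variables (N T : Type) (g : grammar N T).

Lemma yields_generates u w : yields (generates g) u w -> derives g u (map inr w).
Proof.
elim: u w => [|[A|t] u IH] w /=; first by move->; exact: derives_refl.
  by move=> [w1 [w2 [-> HA /IH Hu]]]; rewrite map_cat; apply: derives_cat HA Hu.
by move=> [w' -> /IH Hu]; apply: (derives_cat (derives_refl _ [:: inr t])) Hu.
Qed.

Lemma generates_rule A rhs w : List.In rhs (g A) ->
  yields (generates g) rhs w -> generates g A w.
Proof. by move=> Hin /yields_generates; apply: derives_rule. Qed.

Variable L : N -> seq T -> Prop.

Hypothesis L_closed :
  forall A rhs w, List.In rhs (g A) -> yields L rhs w -> L A w.

Lemma derives_yields u w : derives g u (map inr w) -> yields L u w.
Proof.
move Ev: (map inr w) => v Huv; elim: Huv w Ev => [{}u w <-|{}u v' v'' uv _ IH w Ev].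
  exact: yields_terminals.
move: uv (IH w Ev) => [x [A [y [rhs [Hin [-> ->]]]]]].
case/yields_cat=> [w1 [w2 [-> Hx /yields_cat [w3 [w4 [-> Hrhs Hy]]]]]].
apply/yields_cat; exists w1, (w3 ++ w4); split=> //.
by exists w3, w4; split=> //; apply: L_closed Hrhs.
Qed.

Lemma generates_sound A w : generates g A w -> L A w.
Proof. by move/derives_yields/yields_single. Qed.

End Semantics.

Section UnambiguityCriterion.
Variables (N T : Type) (g : grammar N T) (L : N -> seq T -> Prop).
Hypothesis L_closed :
  forall A rhs w, List.In rhs (g A) -> yields L rhs w -> L A w.

Definition lm_derivation_from u w d := lm_chain g u d /\ last u d = map inr w.

Lemma lm_chain_derives u d : lm_chain g u d -> derives g u (last u d).
Proof.
elim: d u => [|v d IH] u /=; first by move=> _; exact: derives_refl.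
move=> [[x [A [y [rhs [_ [Hin [-> ->]]]]]]] Hd]; apply: derives_step (IH _ Hd).
by exists x, A, y, rhs.
Qed.

Lemma lm_derivation_yields u w d : lm_derivation_from u w d -> yields L u w.
Proof.
by move=> [/lm_chain_derives Hd Hlast]; rewrite Hlast in Hd; exact: derives_yields Hd.
Qed.

Lemma lm_derivation_terminal u w d : all is_terminal u ->
  lm_derivation_from u w d -> d = [::].
Proof.
case: d => // v d Hu [[[x [A [y [rhs [_ [_ [Eu _]]]]]]] _] _].
by move: Hu; rewrite Eu all_cat /= andbF.
Qed.

Lemma lm_step_cat u1 u2 v : lm_step g (u1 ++ u2) v ->
  (exists2 v1, lm_step g u1 v1 & v = v1 ++ u2) \/
  (all is_terminal u1 /\ exists2 v2, lm_step g u2 v2 & v = u1 ++ v2).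
Proof.
move=> [x [A [y [rhs [Hx [Hin [E ->]]]]]]].
case/List.app_eq_app: E => [[|z m] [[E1 E2]|[E1 E2]]]; rewrite ?List.app_nil_r in E1.
- subst; right; split=> //; exists (rhs ++ y) => //; by exists [::], A, y, rhs.
- subst; right; split=> //; exists (rhs ++ y) => //; by exists [::], A, y, rhs.
- case: E2 => Ez E2; subst; left; exists (x ++ rhs ++ m); last by rewrite -!catA.
  by exists x, A, m, rhs.
- subst; move: Hx; rewrite all_cat => /andP [Hu1 Hm]; right; split=> //.
  exists ((z :: m) ++ rhs ++ y); first by exists (z :: m), A, y, rhs.
  by rewrite -!catA.
Qed.

Lemma map_inr_cat u1 u2 (w : seq T) : u1 ++ u2 = map inr w :> seq (N + T) ->
  exists w1 w2, [/\ w = w1 ++ w2, u1 = map inr w1 & u2 = map inr w2].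
Proof.
by move/esym/List.map_eq_app => [w1 [w2 [-> [<- <-]]]]; exists w1, w2.
Qed.

Lemma lm_derivation_cat u1 u2 w d : lm_derivation_from (u1 ++ u2) w d ->
  exists d1 d2 w1 w2, [/\ w = w1 ++ w2, lm_derivation_from u1 w1 d1,
    lm_derivation_from u2 w2 d2 &
    d = map (fun v => v ++ u2) d1 ++ map (fun v => map inr w1 ++ v) d2].
Proof.
elim: d u1 u2 w => [|v d IH] u1 u2 w [/= Hd Hlast].
  by have [w1 [w2 [-> -> ->]]] := map_inr_cat Hlast; exists [::], [::], w1, w2.
case: Hd Hlast => /lm_step_cat [[v1 Hv1 ->]|[Hu1 [v2 Hv2 ->]]] Hd Hlast.
  have [d1 [d2 [w1 [w2 [-> [Hd1 Hl1] Hd2 ->]]]]] := IH _ _ _ (conj Hd Hlast).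
  by exists (v1 :: d1), d2, w1, w2.
have [d1 [d2 [w1 [w2 [-> Hd1 [Hd2 Hl2] ->]]]]] := IH _ _ _ (conj Hd Hlast).
have d1_nil := lm_derivation_terminal Hu1 Hd1; subst d1.
case: Hd1 => _ /= Eu1; subst u1.
by exists [::], (v2 :: d2), w1, w2.
Qed.

Definition splits_uniquely B r := forall w1 w2 w1' w2',
  L B w1 -> yields L r w2 -> L B w1' -> yields L r w2' ->
  w1 ++ w2 = w1' ++ w2' -> w1 = w1'.

Fixpoint factorizes (u : seq (N + T)) : Prop :=
  match u with
  | [::] => True
  | inr _ :: r => factorizes r
  | inl B :: r => [/\ has is_terminal r, splits_uniquely B r & factorizes r]
  end.

Lemma factorizes_tail X u : factorizes (X :: u) -> factorizes u.
Proof. by case: X => [B []|]. Qed.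

Lemma factorizes_head X u w1 w2 w1' w2' : factorizes (X :: u) ->
  yields L [:: X] w1 -> yields L u w2 -> yields L [:: X] w1' -> yields L u w2' ->
  w1 ++ w2 = w1' ++ w2' -> w1 = w1' /\ w2 = w2'.
Proof.
move=> Hu Y1 Y2 Y1' Y2' E.
suff Ew1 : w1 = w1' by split=> //; subst w1'; exact: List.app_inv_head E.
case: X Hu Y1 Y1' => [B [_ B_uniq _]|t _].
  by move=> /yields_single LB /yields_single LB'; exact: B_uniq LB Y2 LB' Y2' E.
move=> /(yields_terminals_inv (t := [:: t])) E1.
by move=> /(yields_terminals_inv (t := [:: t])) E1'; rewrite E1 E1'.
Qed.

Lemma lm_derivation_form_unique M :
  (forall A w d1 d2, size w < M -> lm_derivation_from [:: inl A] w d1 ->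
     lm_derivation_from [:: inl A] w d2 -> d1 = d2) ->
  forall u, factorizes u -> forall w d1 d2, size w <= M ->
  lm_derivation_from u w d1 -> lm_derivation_from u w d2 -> d1 = d2.
Proof.
move=> IH; elim=> [|X u IHu] Hu w d1 d2 w_le H1 H2.
  by rewrite (lm_derivation_terminal _ H1) // (lm_derivation_terminal _ H2).
have [d1a [d1b [w1 [w2 [Ew H1a H1b ->]]]]] := lm_derivation_cat (u1 := [:: X]) H1.
have [d2a [d2b [w1' [w2' [Ew' H2a H2b ->]]]]] := lm_derivation_cat (u1 := [:: X]) H2.
have Y2 := lm_derivation_yields H1b.
have [Ew1 Ew2] := factorizes_head Hu (lm_derivation_yields H1a) Y2
  (lm_derivation_yields H2a) (lm_derivation_yields H2b) (etrans (esym Ew) Ew').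
subst w1' w2'; rewrite Ew size_cat in w_le.
rewrite (IHu (factorizes_tail Hu) w2 _ _ _ H1b H2b); last lia.
case: X Hu H1a H2a {H1 H2} => [B [u_term _ _]|t _] H1a H2a.
  have := yields_size Y2; rewrite has_count in u_term.
  by move=> ?; rewrite (IH B w1 d1a d2a) //; lia.
by rewrite (lm_derivation_terminal _ H1a) // (lm_derivation_terminal _ H2a).
Qed.

Hypothesis rule_determined : forall A r1 r2 w, List.In r1 (g A) ->
  List.In r2 (g A) -> yields L r1 w -> yields L r2 w -> r1 = r2.
Hypothesis rules_factorize : forall A r, List.In r (g A) -> factorizes r.

Lemma lm_derivation_nonnil A w : ~ lm_derivation g A w [::].
Proof. by case=> _; case: w => [|x [|y w]] //= []. Qed.

Lemma lm_step_single A v : lm_step g [:: inl A] v -> List.In v (g A).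
Proof.
move=> [[|z x] [A' [y [rhs [_ [Hin [E ->]]]]]]]; last by case: x E.
by case: E => -> <-; rewrite cats0.
Qed.

(** Leftmost derivations are unique, by induction on the length of the
    word: the first step is the unique rule yielding the word, and the rest
    is unique by [lm_derivation_form_unique]. *)
Theorem non_ambiguous_criterion S : non_ambiguous g S.
Proof.
rewrite /non_ambiguous => w d1 d2.
have [M w_lt] : exists M, size w < M by exists (size w).+1.
elim: M S w d1 d2 w_lt => // M IH A w [|v1 d1] [|v2 d2] w_lt;
  try by [move/lm_derivation_nonnil | move=> _ /lm_derivation_nonnil].
move=> [[Hs1 Hc1] Hl1] [[Hs2 Hc2] Hl2].
have H1 : lm_derivation_from v1 w d1 by [].
have H2 : lm_derivation_from v2 w d2 by [].
have Ev : v1 = v2.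
  apply: (rule_determined (lm_step_single Hs1) (lm_step_single Hs2)).
    exact: lm_derivation_yields H1.
  exact: lm_derivation_yields H2.
subst v2; congr (_ :: _).
exact: (lm_derivation_form_unique IH (rules_factorize (lm_step_single Hs1))) H1 H2.
Qed.

End UnambiguityCriterion.

Fixpoint height (w : seq sym) : Z :=
  match w with
  | [::] => 0%Z
  | Op :: w' => (height w' + 1)%Z
  | Cl :: w' => (height w' - 1)%Z
  | Dot :: w' => height w'
  end.

Lemma height_cat a b : height (a ++ b) = (height a + height b)%Z.
Proof. by elim: a => [|[] a IH] //=; rewrite IH; lia. Qed.

Definition balanced (w : seq sym) : Prop :=
  (forall k, (0 <= height (take k w))%Z) /\ height w = 0%Z.

Lemma balanced_nil : balanced [::].
Proof. by split. Qed.

Lemma balanced_cat a b : balanced a -> balanced b -> balanced (a ++ b).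
Proof.
move=> [Ha Ha0] [Hb Hb0]; split; last by rewrite height_cat; lia.
move=> k; rewrite take_cat; case: ifP => _ //.
rewrite height_cat; have := Hb (k - size a); lia.
Qed.

Lemma balanced_wrap a : balanced a -> balanced (Op :: a ++ [:: Cl]).
Proof.
move=> [Ha Ha0]; split; last by rewrite /= height_cat /=; lia.
case=> [|k] //=; rewrite take_cat; case: ifP => _.
- have := Ha k; lia.
- by rewrite height_cat Ha0; case: (k - size a) => [|[]] /=; lia.
Qed.

Lemma balanced_dot a : balanced a -> balanced (a ++ [:: Dot]).
Proof. by move=> Ha; apply: balanced_cat => //; split => // -[|[]]. Qed.

Lemma balanced_prefix m t : balanced (m ++ t) -> (0 <= height m)%Z.
Proof. by move=> [H _]; have := H (size m); rewrite take_size_cat. Qed.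

(** A word [s ++ ( r] with [s] and [r] balanced determines [s]: a shorter
    or longer balanced [s] would force a prefix of negative height. *)
Lemma balanced_open_split s s' r r' :
  balanced s -> balanced s' -> balanced r -> balanced r' ->
  s ++ Op :: r = s' ++ Op :: r' -> s = s'.
Proof.
have no_overlap a b m t : balanced a -> balanced b -> balanced (m ++ t) ->
    a = b ++ Op :: m -> False.
  move=> [_ Ha0] [_ Hb0] /balanced_prefix Hm Ea.
  by move: Ha0; rewrite Ea height_cat /=; lia.
move=> Hs Hs' Hr Hr' /List.app_eq_app [[|x m] [[E1 E2]|[E1 E2]]].
- by rewrite List.app_nil_r in E1.
- by rewrite List.app_nil_r in E1.
- case: E2 => Ex E2; subst x; rewrite E2 in Hr'.
  by case: (no_overlap s s' m (Op :: r) Hs Hs' Hr' E1).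
- case: E2 => Ex E2; subst x; rewrite E2 in Hr.
  by case: (no_overlap s' s m (Op :: r') Hs' Hs Hr E1).
Qed.

Ltac norm_cat := repeat progress rewrite /= -?catA.

(** Word-level description of canonical structures.  [canon_word enclosed w]
    says that [w] is the dot-bracket word of a structure in which every pair
    is stacked on a neighbouring pair, where, when [enclosed] holds, [w] is
    thought of as surrounded by a pair, so that a pair spanning all of [w]
    is stacked as well. *)
Inductive canon_word : bool -> seq sym -> Prop :=
| CW_nil b : canon_word b [::]
| CW_dot b w : canon_word false w -> canon_word b (w ++ [:: Dot])
| CW_stack b w y : canon_word false w -> canon_word true y -> y <> [::] ->
    canon_word b (w ++ Op :: Op :: y ++ [:: Cl; Cl])
| CW_wrap x : canon_word true x -> x <> [::] ->
    canon_word true (Op :: x ++ [:: Cl]).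

Lemma canon_word_balanced b w : canon_word b w -> balanced w.
Proof.
elim=> {b w} [b|b w _ Hw|b w y _ Hw _ Hy _|x _ Hx _].
- exact: balanced_nil.
- exact: balanced_dot.
- apply: balanced_cat Hw _.
  by have := balanced_wrap (balanced_wrap Hy); norm_cat.
- exact: balanced_wrap.
Qed.

Inductive S_word : seq sym -> Prop :=
| S_dot : S_word [:: Dot]
| S_app_dot s : S_word s -> S_word (s ++ [:: Dot])
| S_wrap r : R_word r -> S_word (Op :: r ++ [:: Cl])
| S_app_wrap s r : S_word s -> R_word r -> S_word (s ++ Op :: r ++ [:: Cl])
with R_word : seq sym -> Prop :=
| R_dot : R_word [:: Op; Dot; Cl]
| R_wrap r : R_word r -> R_word (Op :: r ++ [:: Cl])
| R_app_wrap s r : S_word s -> R_word r ->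
    R_word (Op :: s ++ Op :: r ++ [:: Cl; Cl])
| R_app_dot s : S_word s -> R_word (Op :: s ++ [:: Dot; Cl]).

Lemma S_word_nonempty w : S_word w -> w <> [::].
Proof. by case=> //= [s|s r] _; case: s. Qed.

Lemma canon_word_grammar b w : canon_word b w -> w <> [::] ->
  (b = false -> S_word w) /\ R_word (Op :: w ++ [:: Cl]).
Proof.
elim=> {b w} //.
- move=> b [|x w] _ IH _.
    by split=> [_|]; [exact: S_dot | exact: R_dot].
  have [/(_ erefl) Sw _] := IH ltac:(done).
  split=> [_|]; first exact: S_app_dot.
  by have := R_app_dot Sw; norm_cat.
- move=> b [|x w] y _ IHw _ IHy y_ne _; have [_ Ry] := IHy y_ne.
    split=> [_|]; first by have := S_wrap Ry; norm_cat.
    by have := R_wrap (R_wrap Ry); norm_cat.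
  have [/(_ erefl) Sw _] := IHw ltac:(done).
  split=> [_|]; first by have := S_app_wrap Sw Ry; norm_cat.
  by have := R_app_wrap Sw Ry; norm_cat.
- move=> x _ IH x_ne _; split=> //; exact: R_wrap (proj2 (IH x_ne)).
Qed.

Lemma S_word_canon w : S_word w -> canon_word false w
with R_word_canon w : R_word w ->
  exists2 y, w = Op :: y ++ [:: Cl] & canon_word true y /\ y <> [::].
Proof.
- case=> {w} [|s Ss|r Rr|s r Ss Rr].
  + exact: CW_dot (CW_nil false).
  + exact: CW_dot (S_word_canon _ Ss).
  + have [y -> [Cy y_ne]] := R_word_canon _ Rr.
    by have := CW_stack false (CW_nil false) Cy y_ne; norm_cat.
  + have [y -> [Cy y_ne]] := R_word_canon _ Rr.
    by have := CW_stack false (S_word_canon _ Ss) Cy y_ne; norm_cat.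
- case=> {w} [|r Rr|s r Ss Rr|s Ss].
  + by exists [:: Dot] => //; split => //; exact: CW_dot (CW_nil false).
  + have [y -> [Cy y_ne]] := R_word_canon _ Rr.
    by exists (Op :: y ++ [:: Cl]) => //; split => //; exact: CW_wrap.
  + have [y -> [Cy y_ne]] := R_word_canon _ Rr.
    exists (s ++ Op :: Op :: y ++ [:: Cl; Cl]); first by norm_cat.
    by split; [exact: CW_stack (S_word_canon _ Ss) Cy y_ne | case: s Ss].
  + exists (s ++ [:: Dot]); first by norm_cat.
    by split; [exact: CW_dot (S_word_canon _ Ss) | case: s Ss].
Qed.

Implicit Types (P Q : nat -> nat -> bool).

Lemma pair_bounds n P i j : secstruct n P -> P i j -> [/\ 0 < i, i.+1 < j & j <= n].
Proof. by case=> H _ /H [? ? ? ?]; split; lia. Qed.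

Lemma no_crossing n P i j k l : secstruct n P -> P i j -> P k l ->
  i < k -> k < j -> j < l -> False.
Proof. by case=> _ [H _] Pij Pkl *; apply: (H _ _ _ _ Pij Pkl). Qed.

Lemma pair_unique n P i j k l p : secstruct n P -> P i j -> P k l ->
  p = i \/ p = j -> p = k \/ p = l -> i = k /\ j = l.
Proof. by case=> _ [_ H]; apply: H. Qed.

Lemma pair_congr P a b c d : P a b -> a = c -> b = d -> P c d.
Proof. by move=> ? <- <-. Qed.

Lemma secstruct_widen n P : secstruct n P -> secstruct n.+1 P.
Proof.
move=> H; split; [|split]; last by case: H => _ [].
- by move=> i j /(pair_bounds H) [? ? ?]; split; lia.
- by case: H => _ [].
Qed.

Definition no_pairs : nat -> nat -> bool := fun _ _ => false.

Definition concat n1 P1 P2 : nat -> nat -> bool :=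
  fun a b => P1 a b || (n1 < a) && P2 (a - n1) (b - n1).

Definition enclose m Q : nat -> nat -> bool :=
  fun a b => (a == 1) && (b == m.+2) || (1 < a) && Q a.-1 b.-1.

(** The building blocks [no_pairs], [concat] and [enclose] yield secondary
    structures; enclosure needs a nonempty inside for [j - i > 1]. *)
Lemma secstruct_no_pairs n : secstruct n no_pairs.
Proof. by []. Qed.

Lemma secstruct_concat n1 n2 P1 P2 : secstruct n1 P1 -> secstruct n2 P2 ->
  secstruct (n1 + n2) (concat n1 P1 P2).
Proof.
move=> H1 H2; split; [|split].
- move=> i j /orP [/(pair_bounds H1)|/andP [_ /(pair_bounds H2)]] [? ? ?];
    by split; lia.
- move=> i j k l /orP [Pij|/andP [? Pij]] /orP [Pkl|/andP [? Pkl]] [? [? ?]].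
  + exact: no_crossing H1 Pij Pkl _ _ _.
  + by have [? ? ?] := pair_bounds H1 Pij; have [? ? ?] := pair_bounds H2 Pkl; lia.
  + by have [? ? ?] := pair_bounds H1 Pkl; have [? ? ?] := pair_bounds H2 Pij; lia.
  + by apply: (no_crossing H2 Pij Pkl); lia.
- move=> i j k l p /orP [Pij|/andP [? Pij]] /orP [Pkl|/andP [? Pkl]] Hp1 Hp2.
  + exact: pair_unique H1 Pij Pkl Hp1 Hp2.
  + by have [? ? ?] := pair_bounds H1 Pij; have [? ? ?] := pair_bounds H2 Pkl; lia.
  + by have [? ? ?] := pair_bounds H1 Pkl; have [? ? ?] := pair_bounds H2 Pij; lia.
  + have [? ? ?] := pair_bounds H2 Pij; have [? ? ?] := pair_bounds H2 Pkl.
    by have [] := pair_unique (p := p - n1) H2 Pij Pkl ltac:(lia) ltac:(lia); lia.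
Qed.

Lemma secstruct_enclose m Q : secstruct m Q -> 0 < m ->
  secstruct m.+2 (enclose m Q).
Proof.
move=> H m_gt0; split; [|split].
- by move=> i j /orP [/andP [/eqP -> /eqP ->]|/andP [? /(pair_bounds H) [? ? ?]]];
    split; lia.
- move=> i j k l /orP [/andP [/eqP ? /eqP ?]|/andP [? Pij]]
    /orP [/andP [/eqP ? /eqP ?]|/andP [? Pkl]] [? [? ?]]; try lia.
  + by have [? ? ?] := pair_bounds H Pkl; lia.
  + by apply: (no_crossing H Pij Pkl); lia.
- move=> i j k l p /orP [/andP [/eqP ? /eqP ?]|/andP [? Pij]]
    /orP [/andP [/eqP ? /eqP ?]|/andP [? Pkl]] Hp1 Hp2; try lia.
  + by have [? ? ?] := pair_bounds H Pkl; lia.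
  + by have [? ? ?] := pair_bounds H Pij; lia.
  + have [? ? ?] := pair_bounds H Pij; have [? ? ?] := pair_bounds H Pkl.
    by have [] := pair_unique (p := p.-1) H Pij Pkl ltac:(lia) ltac:(lia); lia.
Qed.

Lemma concat_left n1 P1 P2 a b : a <= n1 -> concat n1 P1 P2 a b = P1 a b.
Proof. by move=> a_le; rewrite /concat ltnNge a_le /= orbF. Qed.

Lemma concat_right n1 P1 P2 a b : secstruct n1 P1 -> n1 < b ->
  concat n1 P1 P2 a b = (n1 < a) && P2 (a - n1) (b - n1).
Proof.
move=> H1 b_gt; rewrite /concat; case P1ab: (P1 a b) => //=.
by have [? ? ?] := pair_bounds H1 P1ab; lia.
Qed.

Lemma enclose_shift m Q a b : 1 < a -> enclose m Q a b = Q a.-1 b.-1.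
Proof. by move=> a_gt1; rewrite /enclose a_gt1 /=; case: eqP => //= a1; lia. Qed.

Lemma enclose_outer m Q : enclose m Q 1 m.+2.
Proof. by rewrite /enclose !eqxx. Qed.

Lemma enclose_cases m Q a b : enclose m Q a b ->
  (a = 1 /\ b = m.+2) \/ (1 < a /\ Q a.-1 b.-1).
Proof. by case/orP => [/andP [/eqP -> /eqP ->]|/andP []]; [left|right]. Qed.

Definition symbol_at n P k : sym :=
  if has (P k) (iota 1 n) then Op
  else if has (fun i => P i k) (iota 1 n) then Cl else Dot.

Lemma dotbracket_symbols n P : dotbracket n P = map (symbol_at n P) (iota 1 n).
Proof. by []. Qed.

Lemma has_iotaP (p : pred nat) n : (forall b, p b -> 0 < b <= n) ->
  reflect (exists b, p b) (has p (iota 1 n)).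
Proof.
move=> range; apply: (iffP hasP) => [[b _ pb]|[b pb]]; first by exists b.
by exists b => //; rewrite mem_iota; have := range b pb; lia.
Qed.

Lemma opensP n P k : secstruct n P ->
  reflect (exists b, P k b) (has (P k) (iota 1 n)).
Proof. by move=> H; apply: has_iotaP => b /(pair_bounds H) [? ? ?]; lia. Qed.

Lemma closesP n P k : secstruct n P ->
  reflect (exists a, P a k) (has (fun a => P a k) (iota 1 n)).
Proof. by move=> H; apply: has_iotaP => a /(pair_bounds H) [? ? ?]; lia. Qed.

Lemma symbol_at_eq n P k n' Q k' : secstruct n P -> secstruct n' Q ->
  ((exists b, P k b) <-> (exists b, Q k' b)) ->
  ((exists a, P a k) <-> (exists a, Q a k')) ->
  symbol_at n P k = symbol_at n' Q k'.
Proof.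
move=> H H' Eopen Eclose.
have open_eq : has (P k) (iota 1 n) = has (Q k') (iota 1 n').
  by apply/(opensP k H)/(opensP k' H'); case: Eopen.
have close_eq : has (fun a => P a k) (iota 1 n) = has (fun a => Q a k') (iota 1 n').
  by apply/(closesP k H)/(closesP k' H'); case: Eclose.
by rewrite /symbol_at open_eq close_eq.
Qed.

Lemma dotbracket_size n P : size (dotbracket n P) = n.
Proof. by rewrite size_map size_iota. Qed.

Lemma dotbracket_concat n1 n2 P1 P2 : secstruct n1 P1 -> secstruct n2 P2 ->
  dotbracket (n1 + n2) (concat n1 P1 P2) = dotbracket n1 P1 ++ dotbracket n2 P2.
Proof.
move=> H1 H2; have H := secstruct_concat H1 H2.
rewrite !dotbracket_symbols iotaD map_cat; congr (_ ++ _).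
- apply/eq_in_map => k; rewrite mem_iota => /andP [_ k_le].
  apply: (symbol_at_eq H H1); split=> -[a Pa].
  + by exists a; rewrite concat_left // in Pa; lia.
  + by exists a; rewrite concat_left //; lia.
  + case/orP: Pa => [Pa|/andP [_ /(pair_bounds H2) [? ? ?]]]; [by exists a|lia].
  + by exists a; rewrite concat_left //; have [? ? ?] := pair_bounds H1 Pa; lia.
- rewrite (addnC 1 n1) iotaDl -map_comp; apply/eq_in_map => k.
  rewrite mem_iota /= => /andP [k_gt0 _].
  apply: (symbol_at_eq H H2); split=> -[a Pa].
  + have [? ? ?] := pair_bounds H Pa.
    move: Pa; rewrite concat_right //; last lia.
    by rewrite addKn => /andP [_ ?]; exists (a - n1).
  + have [? ? ?] := pair_bounds H2 Pa.
    exists (n1 + a); rewrite concat_right //; last lia.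
    by rewrite !addKn Pa andbT; lia.
  + move: Pa; rewrite concat_right //; last lia.
    by rewrite addKn => /andP [_ ?]; exists (a - n1).
  + have [? ? ?] := pair_bounds H2 Pa.
    exists (n1 + a); rewrite concat_right //; last lia.
    by rewrite !addKn Pa andbT; lia.
Qed.

Lemma dotbracket_enclose m Q : secstruct m Q -> 0 < m ->
  dotbracket m.+2 (enclose m Q) = Op :: dotbracket m Q ++ [:: Cl].
Proof.
move=> H m_gt0; have HE := secstruct_enclose H m_gt0.
rewrite !dotbracket_symbols.
have -> : iota 1 m.+2 = 1 :: iota 2 m ++ [:: m.+2].
  by rewrite -[m.+2]addn1 iotaD /= add1n addn1.
rewrite /= map_cat; congr (_ :: _ ++ [:: _]).
- by rewrite /symbol_at; case: (opensP 1 HE) => // -[]; exists m.+2; exact: enclose_outer.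
- rewrite (_ : 2 = 1 + 1) // iotaDl -map_comp; apply/eq_in_map => k.
  rewrite mem_iota /= => /andP [k_gt0 k_le].
  apply: (symbol_at_eq HE H); split=> -[a Pa].
  + by case/enclose_cases: Pa => [[]|[_ Qa]]; [lia|exists a.-1].
  + by exists a.+1; rewrite enclose_shift.
  + by case/enclose_cases: Pa => [[]|[_ Qa]]; [lia|exists a.-1].
  + by exists a.+1; rewrite enclose_shift //; have [] := pair_bounds H Pa.
- rewrite /symbol_at; case: (opensP m.+2 HE) => [[b /enclose_cases]|_].
    by case=> [[]|[_ /(pair_bounds H) [? ? ?]]]; lia.
  by case: (closesP m.+2 HE) => // -[]; exists 1; exact: enclose_outer.
Qed.

Lemma dotbracket_widen n P : secstruct n P ->
  dotbracket n.+1 P = dotbracket n P ++ [:: Dot].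
Proof.
move=> H; have := dotbracket_concat H (secstruct_no_pairs 1).
have -> : concat n P no_pairs = P.
  by do 2 apply: functional_extensionality => ?; rewrite /concat andbF orbF.
by rewrite addn1.
Qed.

Definition before i P : nat -> nat -> bool := fun a b => P a b && (b < i).

Definition between i n P : nat -> nat -> bool :=
  fun a b => [&& P (i + a) (i + b), 0 < a & i + b <= n].

Lemma secstruct_before n P i : secstruct n P -> secstruct i.-1 (before i P).
Proof.
move=> H; split; [|split].
- by move=> a b /andP [/(pair_bounds H) [? ? ?] ?]; split; lia.
- move=> a b c d /andP [Pab _] /andP [Pcd _] [? [? ?]].
  exact: no_crossing H Pab Pcd _ _ _.
- by move=> a b c d p /andP [Pab _] /andP [Pcd _]; apply: pair_unique H Pab Pcd.
Qed.

Lemma secstruct_between N n P i : secstruct N P -> secstruct (n - i) (between i n P).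
Proof.
move=> H; split; [|split].
- by move=> a b /and3P [/(pair_bounds H) [? ? ?] ? ?]; split; lia.
- move=> a b c d /and3P [Pab _ _] /and3P [Pcd _ _] [? [? ?]].
  by apply: (no_crossing H Pab Pcd); lia.
- move=> a b c d p /and3P [Pab ? _] /and3P [Pcd ? _] Hp1 Hp2.
  by have [] := pair_unique (p := i + p) H Pab Pcd ltac:(lia) ltac:(lia); lia.
Qed.

Lemma split_at_last n P i : secstruct n.+1 P -> P i n.+1 ->
  P = concat i.-1 (before i P) (enclose (n - i) (between i n P)).
Proof.
move=> H Pi; have [? ? ?] := pair_bounds H Pi.
apply: functional_extensionality => a; apply: functional_extensionality => b.
apply/idP/idP => [Pab|].
- have [? ? ?] := pair_bounds H Pab.
  have [b_lt|i_le_b] := ltnP b i; first by rewrite /concat /before Pab b_lt.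
  have : (a = i /\ b = n.+1) \/ (i < a /\ b <= n).
    have [b_last|b_le] := eqVneq b n.+1.
      by have [] := pair_unique (p := b) H Pab Pi (or_intror erefl) ltac:(lia); left.
    have [a_le|a_gt] := leqP a i; last by right; lia.
    have a_ne : a <> i.
      move=> Eai; have [] := pair_unique (p := a) H Pab Pi
        (or_introl erefl) (or_introl Eai); lia.
    have b_ne : b <> i.
      move=> Ebi; have [] := pair_unique (p := b) H Pab Pi
        (or_intror erefl) (or_introl Ebi); lia.
    by case: (no_crossing H Pab Pi); lia.
  case=> [[-> ->]|[? ?]]; apply/orP; right; apply/andP; split; try lia.
    have -> : i - i.-1 = 1 by lia.
    have -> : n.+1 - i.-1 = (n - i).+2 by lia.
    exact: enclose_outer.
  have -> : a - i.-1 = (a - i).+1 by lia.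
  have -> : b - i.-1 = (b - i).+1 by lia.
  by rewrite enclose_shift /= /between ?subnKC ?Pab //=; lia.
- case/orP=> [/andP [] //|/andP [?]].
  case/enclose_cases=> [[? ?]|[? /and3P [Pab ? ?]]].
    by rewrite (_ : a = i) 1?(_ : b = n.+1) //; lia.
  have [? ? ?] := pair_bounds H Pab.
  by rewrite (_ : a = i + (a - i.-1).-1) 1?(_ : b = i + (b - i.-1).-1) //; lia.
Qed.

Lemma last_position_cases n P : secstruct n.+1 P ->
  (secstruct n P /\ forall a, ~~ P a n.+1) \/
  exists l m L I, [/\ n.+1 = l + m.+2, 0 < m, secstruct l L, secstruct m I
                    & P = concat l L (enclose m I)].
Proof.
move=> H; case: (closesP n.+1 H) => [[i Pi]|no_close].
  right; have [? ? ?] := pair_bounds H Pi.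
  exists i.-1, (n - i), (before i P), (between i n P); split; try lia.
  - exact: secstruct_before H.
  - exact: secstruct_between H.
  - exact: split_at_last.
left; split=> [|a]; last by apply/negP => Pa; apply: no_close; exists a.
split; [|split]; try by case: H => _ [].
move=> i j Pij; have [? ? ?] := pair_bounds H Pij.
have : j != n.+1 by apply/eqP => Ej; apply: no_close; exists i; rewrite -Ej.
by split; lia.
Qed.

(** Canonicity of [P] on [1..n] inside a context: every pair is stacked on a
    neighbouring pair, except that, when [enclosed] holds, the pair [(1, n)]
    may instead be stacked on the enclosing pair. *)
Definition canonical_in (enclosed : bool) n P : Prop :=
  forall i j, P i j -> P i.-1 j.+1 \/ P i.+1 j.-1 \/ (enclosed /\ i = 1 /\ j = n).

Lemma canonical_in_false n P : canonical P <-> canonical_in false n P.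
Proof.
split=> C i j /C; first by case=> ?; [left|right; left].
by case=> [?|[?|[F _]]]; [left|right|].
Qed.

Lemma canonical_in_weaken b n n' P : canonical_in false n P -> canonical_in b n' P.
Proof. by move=> C i j /C [?|[?|[F _]]]; [left|right; left|]. Qed.

Lemma canonical_concat n1 n2 P1 P2 : secstruct n1 P1 -> secstruct n2 P2 ->
  canonical_in false n1 P1 -> canonical_in false n2 P2 ->
  canonical_in false (n1 + n2) (concat n1 P1 P2).
Proof.
move=> H1 H2 C1 C2 i j /orP [Pij|/andP [i_gt Pij]].
  have [? ? ?] := pair_bounds H1 Pij.
  case: (C1 _ _ Pij) => [?|[?|[F _]]] //; [left|right; left];
    by rewrite concat_left //; lia.
have [? ? ?] := pair_bounds H2 Pij.
case: (C2 _ _ Pij) => [P'|[P'|[F _]]] //; [left|right; left];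
  have [? ? ?] := pair_bounds H2 P'; rewrite concat_right //; try lia;
  (apply/andP; split; [lia|apply: (pair_congr P'); lia]).
Qed.

Lemma canonical_enclose (b : bool) m Q : secstruct m Q -> canonical_in true m Q ->
  b \/ Q 1 m -> canonical_in b m.+2 (enclose m Q).
Proof.
move=> H C outer i j /enclose_cases [[-> ->]|[i_gt Qij]].
  case: outer => [?|Q1m]; [by right; right|right; left].
  by rewrite enclose_shift.
have [? ? ?] := pair_bounds H Qij.
case: (C _ _ Qij) => [Q'|[Q'|[_ [? ?]]]].
- have [? ? ?] := pair_bounds H Q'.
  by left; rewrite enclose_shift; [apply: (pair_congr Q')|]; lia.
- have [? ? ?] := pair_bounds H Q'.
  by right; left; rewrite enclose_shift; [apply: (pair_congr Q')|]; lia.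
- by left; apply: (pair_congr (enclose_outer m Q)); lia.
Qed.

Lemma canonical_concat_left b n1 n2 L R : secstruct n1 L -> secstruct n2 R ->
  0 < n2 -> canonical_in b (n1 + n2) (concat n1 L R) -> canonical_in false n1 L.
Proof.
move=> H1 H2 n2_gt0 C i j Lij; have [? ? ?] := pair_bounds H1 Lij.
have := C i j; rewrite concat_left ?Lij; last lia.
case/(_ isT)=> [|[|[_ [_ ?]]]]; last lia.
- by rewrite concat_left; [left|lia].
- by rewrite concat_left; [right; left|lia].
Qed.

Lemma canonical_concat_right b n1 n2 L R : secstruct n1 L -> secstruct n2 R ->
  canonical_in b (n1 + n2) (concat n1 L R) -> canonical_in (b && (n1 == 0)) n2 R.
Proof.
move=> H1 H2 C i j Rij; have [? ? ?] := pair_bounds H2 Rij.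
have Cij : concat n1 L R (n1 + i) (n1 + j).
  by rewrite concat_right // ?addKn ?Rij ?andbT; lia.
case: (C _ _ Cij) => [C'|[C'|[b_true [? ?]]]].
- move: C'; rewrite concat_right //; last lia.
  by case/andP=> _ R'; left; apply: (pair_congr R'); lia.
- move: C'; rewrite concat_right //; last lia.
  by case/andP=> _ R'; right; left; apply: (pair_congr R'); lia.
- by right; right; rewrite b_true; split; [apply/eqP; lia|lia].
Qed.

Lemma canonical_enclose_inv b m Q : secstruct m Q ->
  canonical_in b m.+2 (enclose m Q) -> canonical_in true m Q /\ (b \/ Q 1 m).
Proof.
move=> H C; split=> [i j Qij|].
  have [? ? ?] := pair_bounds H Qij.
  have Eij : enclose m Q i.+1 j.+1 by rewrite enclose_shift.
  case: (C _ _ Eij) => [/enclose_cases|[/enclose_cases|[_ [? _]]]]; try lia.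
  - by case=> [[? ?]|[_ Q']]; [right; right; split; lia|left].
  - by case=> [[? ?]|[_ Q']]; [lia|right; left].
case: (C _ _ (enclose_outer m Q)) => [/enclose_cases|[/enclose_cases|[? _]]].
- by case=> [[]|[]].
- by case=> [[]|[_ ?]]; [|right].
- by left.
Qed.

(** Dropping an unpaired last position keeps canonicity (the whole range
    [(1, n+1)] is no longer a pair). *)
Lemma canonical_narrow b n P : canonical_in b n.+1 P ->
  (forall a, ~~ P a n.+1) -> canonical_in false n P.
Proof.
move=> C unpaired i j Pij.
case: (C _ _ Pij) => [?|[?|[_ [_ Ej]]]]; [by left|by right; left|].
by move: Pij; rewrite Ej (negbTE (unpaired i)).
Qed.

Lemma outer_pair_enclose m Q : secstruct m Q -> Q 1 m ->
  exists m' Q', [/\ m = m'.+2, 0 < m', secstruct m' Q' & Q = enclose m' Q'].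
Proof.
move=> H Q1m; have [_ m_gt1 _] := pair_bounds H Q1m.
case: m m_gt1 H Q1m => [//|n] _ H Q1m.
have [[_ /(_ 1) /negP //]|[l [m' [L [I [En m'_gt0 HL HI EQ]]]]]] := last_position_cases H.
have l0 : l = 0.
  by move: Q1m; rewrite EQ concat_right //; [case/andP; lia|lia].
exists m', I; split; [lia|done|done|]; rewrite EQ l0.
apply: functional_extensionality => a; apply: functional_extensionality => b.
rewrite /concat !subn0; case La: (L a b).
  by rewrite l0 in HL; have [] := pair_bounds HL La; lia.
by case: a La.
Qed.

Lemma dotbracket_nonempty n P : 0 < n -> dotbracket n P <> [::].
Proof. by move=> n_gt0 /(f_equal size); rewrite dotbracket_size /=; lia. Qed.

Lemma structure_canon_word b n P : secstruct n P -> canonical_in b n P ->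
  canon_word b (dotbracket n P).
Proof.
elim/ltn_ind: n b P => -[_ b P _ _|n IH b P H C]; first exact: CW_nil.
have [[H' unpaired]|[l [m [L [I [En m_gt0 HL HI EP]]]]]] := last_position_cases H.
  rewrite dotbracket_widen //; apply: CW_dot.
  exact: IH H' (canonical_narrow C unpaired).
have HE := secstruct_enclose HI m_gt0.
move: C; rewrite EP En dotbracket_concat // dotbracket_enclose // => C.
have CL := canonical_concat_left HL HE (ltn0Sn _) C.
have WL : canon_word false (dotbracket l L) by apply: IH HL CL; lia.
have [CI [/andP [b_true /eqP l0]|I1m]] :=
  canonical_enclose_inv HI (canonical_concat_right HL HE C).
  rewrite b_true l0 /=; apply: CW_wrap; last exact: dotbracket_nonempty.
  by apply: IH HI CI; lia.
have [m' [I' [Em m'_gt0 HI' EI]]] := outer_pair_enclose HI I1m; subst m I.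
have [CI' _] := canonical_enclose_inv HI' CI.
rewrite dotbracket_enclose //; norm_cat.
apply: (CW_stack _ WL); last exact: dotbracket_nonempty.
by apply: IH HI' CI'; lia.
Qed.

Lemma canon_word_structure b w : canon_word b w ->
  exists n P, [/\ secstruct n P, canonical_in b n P & dotbracket n P = w].
Proof.
have size_pos n P : dotbracket n P <> [::] -> 0 < n by case: n => // /(_ erefl).
elim=> {b w} [b|b w _ IHw|b w y _ IHw _ IHy y_ne|x _ IHx x_ne].
- by exists 0, no_pairs; split.
- have [n [P [H C <-]]] := IHw; exists n.+1, P; split.
  + exact: secstruct_widen.
  + exact: canonical_in_weaken C.
  + exact: dotbracket_widen.
- have [n [P [H C <-]]] := IHw; have [m [Q [HQ CQ Ey]]] := IHy.
  have m_gt0 : 0 < m by apply: (size_pos _ Q); rewrite Ey.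
  have HE := secstruct_enclose HQ m_gt0.
  have HEE := secstruct_enclose HE (ltn0Sn _).
  exists (n + m.+4), (concat n P (enclose m.+2 (enclose m Q))); split.
  + exact: secstruct_concat.
  + apply/canonical_in_weaken/(canonical_concat H HEE C).
    apply: (canonical_enclose HE); last by right; exact: enclose_outer.
    by apply: (canonical_enclose HQ CQ); left.
  + by rewrite dotbracket_concat // !dotbracket_enclose // Ey; norm_cat.
- have [m [Q [HQ CQ Ex]]] := IHx.
  have m_gt0 : 0 < m by apply: (size_pos _ Q); rewrite Ex.
  exists m.+2, (enclose m Q); split.
  + exact: secstruct_enclose.
  + by apply: (canonical_enclose HQ CQ); left.
  + by rewrite dotbracket_enclose // Ex.
Qed.

Lemma canon_ss_word_iff w : canon_ss_word w <-> canon_word false w.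
Proof.
split=> [[n [P [H [/(canonical_in_false n) C <-]]]]|].
  exact: structure_canon_word.
case/canon_word_structure=> n [P [H C <-]].
by exists n, P; split=> //; split=> //; apply/(canonical_in_false n).
Qed.

Lemma structure_balanced n P : secstruct n P -> balanced (dotbracket n P).
Proof.
elim/ltn_ind: n P => -[_ P _|n IH P H]; first exact: balanced_nil.
have [[H' _]|[l [m [L [I [En m_gt0 HL HI ->]]]]]] := last_position_cases H.
  by rewrite dotbracket_widen //; apply/balanced_dot/IH.
rewrite En dotbracket_concat ?dotbracket_enclose //; last exact: secstruct_enclose.
by apply: balanced_cat; [|apply: balanced_wrap]; apply: IH => //; lia.
Qed.

Definition rna_lang (A : nt) : seq sym -> Prop :=
  match A with NS => S_word | NR => R_word end.

Lemma rna_rules_sound A rhs w : List.In rhs (rna_grammar A) ->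
  yields rna_lang rhs w -> rna_lang A w.
Proof.
case: A => [[|[|[|[|[]]]]]|[|[|[|[|[]]]]]] <- /=.
- by move=> [_ -> ->]; exact: S_dot.
- by move=> [s [_ [-> Ss [_ -> ->]]]]; exact: S_app_dot.
- by move=> [_ -> [r [_ [-> Rr [_ -> ->]]]]]; exact: S_wrap.
- by move=> [s [_ [-> Ss [_ -> [r [_ [-> Rr [_ -> ->]]]]]]]]; exact: S_app_wrap.
- by move=> [_ -> [_ -> [_ -> ->]]]; exact: R_dot.
- by move=> [_ -> [r [_ [-> Rr [_ -> ->]]]]]; exact: R_wrap.
- move=> [_ -> [s [_ [-> Ss [_ -> [r [_ [-> Rr [_ -> [_ -> ->]]]]]]]]]].
  exact: R_app_wrap.
- by move=> [_ -> [s [_ [-> Ss [_ -> [_ -> ->]]]]]]; exact: R_app_dot.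
Qed.

(** Proves that a word is generated by applying the rule with right-hand
    side [rhs], the derivability of its nonterminal parts being in context. *)
Tactic Notation "by_rule" uconstr(r) :=
  apply (generates_rule (rhs := r));
    [ by rewrite /=; do ![by left | right]
    | repeat first [ exact: yields_nil | apply: yields_term
                   | apply: yields_nonterm; first eassumption ] ].

Lemma S_word_generated w : S_word w -> generates rna_grammar NS w
with R_word_generated w : R_word w -> generates rna_grammar NR w.
Proof.
- case=> {w} [|s Ss|r Rr|s r Ss Rr].
  + by by_rule [:: inr Dot].
  + have Gs := S_word_generated _ Ss.
    by by_rule [:: inl NS; inr Dot].
  + have Gr := R_word_generated _ Rr.
    by by_rule [:: inr Op; inl NR; inr Cl].
  + have Gs := S_word_generated _ Ss; have Gr := R_word_generated _ Rr.
    by by_rule [:: inl NS; inr Op; inl NR; inr Cl].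
- case=> {w} [|r Rr|s r Ss Rr|s Ss].
  + by by_rule [:: inr Op; inr Dot; inr Cl].
  + have Gr := R_word_generated _ Rr.
    by by_rule [:: inr Op; inl NR; inr Cl].
  + have Gs := S_word_generated _ Ss; have Gr := R_word_generated _ Rr.
    by by_rule [:: inr Op; inl NS; inr Op; inl NR; inr Cl; inr Cl].
  + have Gs := S_word_generated _ Ss.
    by by_rule [:: inr Op; inl NS; inr Dot; inr Cl].
Qed.

Lemma generates_rna A w : generates rna_grammar A w <-> rna_lang A w.
Proof.
split; first exact: (generates_sound rna_rules_sound).
by case: A => /=; [exact: S_word_generated|exact: R_word_generated].
Qed.

Lemma S_word_spec w : S_word w <-> w <> [::] /\ canon_ss_word w.
Proof.
split=> [Sw|[w_ne /canon_ss_word_iff Cw]].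
  by split; [exact: S_word_nonempty|apply/canon_ss_word_iff; exact: S_word_canon].
exact: (canon_word_grammar Cw w_ne).1.
Qed.


(** [R] generates the nonempty words [w] of secondary structures for which
    [(w)] is canonical: such a [(w)] must end in a stacked helix [((y))]
    spanning the whole word, since a shorter one would leave a prefix of [w]
    of negative height. *)
Lemma R_word_spec w :
  R_word w <-> w <> [::] /\ ss_word w /\ canon_ss_word (Op :: rcons w Cl).
Proof.
split.
  case/R_word_canon=> y -> [Cy y_ne]; split=> //; split.
    have [n [P [H _ Ew]]] := canon_word_structure (CW_wrap Cy y_ne).
    by exists n, P.
  apply/canon_ss_word_iff; rewrite -cats1.
  by have := CW_stack false (CW_nil false) Cy y_ne; norm_cat.
move=> [w_ne [[n [P [H Ew]]] /canon_ss_word_iff]].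
have w_bal : balanced w by rewrite -Ew; exact: structure_balanced.
rewrite -cats1; move Ez: (Op :: w ++ [:: Cl]) => z; move Eb: false => b Cz.
case: Cz Ez Eb => // [b' w' _|b' [|x w'] y Cw' Cy y_ne].
- by rewrite -cat_cons !cats1 => /rcons_inj [].
- case=> Ew'; rewrite (_ : w = Op :: y ++ [:: Cl]).
    by move=> _; exact: (canon_word_grammar Cy y_ne).2.
  by apply: (@rcons_injl _ Cl); rewrite -!cats1 Ew'; norm_cat.
- case=> Ex Ew' _; subst x; exfalso.
  have Ew'' : w = w' ++ Op :: Op :: y ++ [:: Cl].
    by apply: (@rcons_injl _ Cl); rewrite -!cats1 Ew'; norm_cat.
  have [_ h0] := canon_word_balanced Cw'; move: w_bal; rewrite Ew''.
  move=> /balanced_prefix; rewrite /= in h0; lia.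
Qed.

Lemma S_word_balanced w : S_word w -> balanced w.
Proof. by move/S_word_canon/canon_word_balanced. Qed.

Lemma R_word_wrapped w : R_word w -> exists2 y, balanced y & w = Op :: y ++ [:: Cl].
Proof. by case/R_word_canon=> y -> [/canon_word_balanced ? _]; exists y. Qed.

Lemma R_word_balanced w : R_word w -> balanced w.
Proof. by case/R_word_wrapped=> y ? ->; exact: balanced_wrap. Qed.

(** The four shapes of words produced by the four rules of [S]; the rules of
    [R] produce words of these shapes enclosed in a pair. *)
Inductive shape := Dot1 | DotEnd | Wrap | WrapEnd.

Definition has_shape (k : shape) (w : seq sym) : Prop :=
  match k with
  | Dot1 => w = [:: Dot]
  | DotEnd => exists2 s, s <> [::] & w = s ++ [:: Dot]
  | Wrap => exists2 y, balanced y & w = Op :: y ++ [:: Cl]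
  | WrapEnd => exists s r,
      [/\ s <> [::], balanced s, balanced r & w = s ++ Op :: r ++ [:: Cl]]
  end.

Definition shape_end (k : shape) : sym :=
  if k is Dot1 then Dot else if k is DotEnd then Dot else Cl.

Lemma has_shape_end k w : has_shape k w -> exists v, w = rcons v (shape_end k).
Proof.
case: k => /= [->|[s _ ->]|[y _ ->]|[s [r [_ _ _ ->]]]].
- by exists [::].
- by exists s; rewrite cats1.
- by exists (Op :: y); rewrite -cats1.
- by exists (s ++ Op :: r); rewrite -cats1 -catA.
Qed.

(** A word has at most one shape: the last symbol separates the dotted
    shapes from the wrapped ones, the length separates [Dot1] from
    [DotEnd], and unique splitting of balanced words separates [Wrap] from
    [WrapEnd]. *)
Lemma shape_unique k1 k2 w : has_shape k1 w -> has_shape k2 w -> k1 = k2.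
Proof.
move=> H1 H2; have [v1 E1] := has_shape_end H1; have [v2 E2] := has_shape_end H2.
have : shape_end k1 = shape_end k2 by move: E2; rewrite E1 => /rcons_inj [].
have dot1_dotend s : s <> [::] -> [:: Dot] <> s ++ [:: Dot].
  by case: s => // x [|y s] _ //= [_ /(f_equal size)]; rewrite size_cat addnC.
have wrap_wrapend y s r : balanced y -> s <> [::] -> balanced s -> balanced r ->
    Op :: y ++ [:: Cl] <> s ++ Op :: r ++ [:: Cl].
  move=> Hy s_ne Hs Hr; rewrite -!cat_cons catA.
  move/(@List.app_inv_tail _ [:: Cl] (Op :: y) (s ++ Op :: r)) => E.
  by apply: s_ne; have := balanced_open_split balanced_nil Hs Hy Hr E.
case: k1 k2 H1 H2 {E1 E2} => -[] //= H1 H2 _.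
- by case: H2 => s /dot1_dotend; rewrite H1.
- by case: H1 => s /dot1_dotend; rewrite H2.
- by case: H1 H2 => [y Hy ->] [s [r [s_ne Hs Hr /(wrap_wrapend y s r Hy s_ne Hs Hr)]]].
- case: H1 H2 => [s [r [s_ne Hs Hr ->]]] [y Hy].
  by move/esym/(wrap_wrapend y s r Hy s_ne Hs Hr).
Qed.

Definition S_rhs (k : shape) : seq (nt + sym) :=
  match k with
  | Dot1 => [:: inr Dot]
  | DotEnd => [:: inl NS; inr Dot]
  | Wrap => [:: inr Op; inl NR; inr Cl]
  | WrapEnd => [:: inl NS; inr Op; inl NR; inr Cl]
  end.

Definition R_rhs (k : shape) : seq (nt + sym) :=
  match k with
  | Dot1 => [:: inr Op; inr Dot; inr Cl]
  | DotEnd => [:: inr Op; inl NS; inr Dot; inr Cl]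
  | Wrap => [:: inr Op; inl NR; inr Cl]
  | WrapEnd => [:: inr Op; inl NS; inr Op; inl NR; inr Cl; inr Cl]
  end.

Lemma S_rule_shape rhs w : List.In rhs (rna_grammar NS) ->
  yields rna_lang rhs w -> exists2 k, rhs = S_rhs k & has_shape k w.
Proof.
case=> [|[|[|[|[]]]]] <- /=.
- by move=> [_ -> ->]; exists Dot1.
- by move=> [s [_ [-> /S_word_nonempty ? [_ -> ->]]]]; exists DotEnd => //; exists s.
- by move=> [_ -> [r [_ [-> /R_word_balanced ? [_ -> ->]]]]]; exists Wrap => //; exists r.
- move=> [s [_ [-> Ss [_ -> [r [_ [-> /R_word_balanced ? [_ -> ->]]]]]]]].
  exists WrapEnd => //; exists s, r.
  by split=> //; [exact: S_word_nonempty|exact: S_word_balanced].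
Qed.

Lemma R_rule_shape rhs w : List.In rhs (rna_grammar NR) ->
  yields rna_lang rhs w ->
  exists2 k, rhs = R_rhs k & exists2 x, has_shape k x & w = Op :: x ++ [:: Cl].
Proof.
case=> [|[|[|[|[]]]]] <- /=.
- by move=> [_ -> [_ -> [_ -> ->]]]; exists Dot1 => //; exists [:: Dot].
- by move=> [_ -> [r [_ [-> /R_word_wrapped ? [_ -> ->]]]]]; exists Wrap => //; exists r.
- move=> [_ -> [s [_ [-> Ss [_ -> [r [_ [-> /R_word_balanced ? [_ -> [_ -> ->]]]]]]]]]].
  exists WrapEnd => //; exists (s ++ Op :: r ++ [:: Cl]); last by norm_cat.
  by exists s, r; split=> //; [exact: S_word_nonempty|exact: S_word_balanced].
- move=> [_ -> [s [_ [-> Ss [_ -> [_ -> ->]]]]]].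
  exists DotEnd => //; exists (s ++ [:: Dot]); last by norm_cat.
  by exists s => //; exact: S_word_nonempty.
Qed.

Lemma rna_rule_determined A r1 r2 w :
  List.In r1 (rna_grammar A) -> List.In r2 (rna_grammar A) ->
  yields rna_lang r1 w -> yields rna_lang r2 w -> r1 = r2.
Proof.
case: A => In1 In2 Y1 Y2.
  have [k1 -> H1] := S_rule_shape In1 Y1; have [k2 -> H2] := S_rule_shape In2 Y2.
  by rewrite (shape_unique H1 H2).
have [k1 -> [x1 H1 Ew1]] := R_rule_shape In1 Y1.
have [k2 -> [x2 H2 Ew2]] := R_rule_shape In2 Y2.
move: Ew2; rewrite Ew1 => -[/(@List.app_inv_tail _ [:: Cl] x1 x2) Ex].
by rewrite Ex in H1; rewrite (shape_unique H1 H2).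
Qed.

Lemma splits_before_terminals B (t : seq sym) :
  splits_uniquely rna_lang B (map inr t).
Proof.
move=> w1 w2 w1' w2' _ /yields_terminals_inv -> _ /yields_terminals_inv ->.
exact: List.app_inv_tail.
Qed.

(** An [S]-word followed by [(R] is split by unique splitting of balanced
    words. *)
Lemma splits_before_open t :
  splits_uniquely rna_lang NS [:: inr Op, inl NR & map inr t].
Proof.
move=> s w2 s' w2' /S_word_balanced Hs
  [_ -> [r [_ [-> /R_word_balanced Hr /yields_terminals_inv ->]]]] /S_word_balanced Hs'
  [_ -> [r' [_ [-> /R_word_balanced Hr' /yields_terminals_inv ->]]]].
rewrite -!cat_cons !catA => /(@List.app_inv_tail _ t (s ++ Op :: r) (s' ++ Op :: r')).
exact: balanced_open_split.
Qed.

Lemma rna_rules_factorize A r : List.In r (rna_grammar A) -> factorizes rna_lang r.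
Proof.
case: A => [[|[|[|[|[]]]]]|[|[|[|[|[]]]]]] <- //=; repeat split.
- exact: (splits_before_terminals (t := [:: Dot])).
- exact: (splits_before_terminals (t := [:: Cl])).
- exact: (splits_before_open (t := [:: Cl])).
- exact: (splits_before_terminals (t := [:: Cl])).
- exact: (splits_before_terminals (t := [:: Cl])).
- exact: (splits_before_open (t := [:: Cl; Cl])).
- exact: (splits_before_terminals (t := [:: Cl; Cl])).
- exact: (splits_before_terminals (t := [:: Dot; Cl])).
Qed.

Theorem mainTheorem3 :
  non_ambiguous rna_grammar NS /\
  (forall w : list sym,
     generates rna_grammar NS w <-> w <> [::] /\ canon_ss_word w) /\
  (forall w : list sym,
     generates rna_grammar NR w <->
       w <> [::] /\ ss_word w /\ canon_ss_word (Op :: rcons w Cl)).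
Proof.
split.
  exact: (non_ambiguous_criterion rna_rules_sound rna_rule_determined
            rna_rules_factorize).
by split=> w; rewrite generates_rna; [exact: S_word_spec|exact: R_word_spec].
Qed.
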